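(* Let $\mathfrak{S}=(\mathcal{X},\mathsf{S},\gamma,(\Lambda_{a})_{a\in\mathcal{A}})$ be a spectral decomposition system for the Euclidean space $\mathfrak{H}$ and let $\varphi\colon\mathcal{X}\to[-\infty,+\infty]$ be $\mathsf{S}$-invariant. Then: (i) $\overline{\varphi\circ\gamma}=\overline{\varphi}\circ\gamma$; (ii) for every $X\in\mathfrak{H}$, $\varphi\circ\gamma$ is lower semicontinuous at $X$ if and only if $\varphi$ is lower semicontinuous at $\gamma(X)$; (iii) $\varphi\circ\gamma$ is lower semicontinuous if and only if $\varphi$ is lower semicontinuous.
   Context: A Euclidean space is a finite-dimensional real inner product space; inner products are written $\langle\cdot,\cdot\rangle$ and norms $\|\cdot\|$. Let $\mathfrak{H}$ and $\mathcal{X}$ be Euclidean spaces, let $\mathsf{S}$ be a group acting on $\mathcal{X}$ by linear isometries, let $\gamma\colon\mathfrak{H}\to\mathcal{X}$, and let $(\Lambda_a)_{a\in\mathcal{A}}$ be a family of linear operators from $\mathcal{X}$ to $\mathfrak{H}$. The orbit of $x$ is $\mathsf{S}\cdot x=\{s\cdot x: s\in\mathsf{S}\}$; a map $f$ on $\mathcal{X}$ is $\mathsf{S}$-invariant if $f(s\cdot x)=f(x)$ for all $s,x$. The tuple is a spectral decomposition system for $\mathfrak{H}$ if: [A] every $\Lambda_a$ is an isometry; [B] there exists an $\mathsf{S}$-invariant $\tau\colon\mathcal{X}\to\mathcal{X}$ with $\tau(x)\in\mathsf{S}\cdot x$ for all $x$ and $\gamma\circ\Lambda_a=\tau$ for all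 $a$; [C] for every $X\in\mathfrak{H}$ there is $a$ with $X=\Lambda_a\gamma(X)$; [D] $\langle X,Y\rangle\leq\langle\gamma(X),\gamma(Y)\rangle$ for all $X,Y\in\mathfrak{H}$. For a function $f\colon\mathcal{H}\to[-\infty,+\infty]$, $\overline{f}$ denotes its lower semicontinuous envelope, i.e. the pointwise supremum of all lower semicontinuous functions $g\colon\mathcal{H}\to[-\infty,+\infty]$ with $g\leq f$. *)

From HB Require Import structures.
From mathcomp Require Import all_boot all_order all_algebra.
From mathcomp Require Import all_classical all_reals all_analysis.
Set Implicit Arguments. Unset Strict Implicit. Unset Printing Implicit Defensive.
Import Order.TTheory GRing.Theory Num.Theory.
Import numFieldTopology.Exports numFieldNormedType.Exports.
Local Open Scope classical_set_scope.
Local Open Scope ring_scope.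

(* Euclidean spaces are modelled as row vectors 'rV[R]_n with the standard
   inner product; the topology is the canonical (norm) topology of 'rV[R]_n. *)
Definition dotv (R : realType) (n : nat) (u v : 'rV[R]_n) : R :=
  \sum_(i < n) u ord0 i * v ord0 i.

Definition enorm (R : realType) (n : nat) (u : 'rV[R]_n) : R :=
  Num.sqrt (dotv u u).

Definition linear_map (R : realType) (n m : nat) (f : 'rV[R]_n -> 'rV[R]_m) :=
  forall (a : R) (x y : 'rV[R]_n), f (a *: x + y) = a *: f x + f y.

Definition linear_isometry (R : realType) (n m : nat) (f : 'rV[R]_n -> 'rV[R]_m) :=
  linear_map f /\ forall x, enorm (f x) = enorm x.

Definition isometric_group_action (R : realType) (m : nat) (S : Type)
  (mul : S -> S -> S) (one : S) (inv : S -> S)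
  (act : S -> 'rV[R]_m -> 'rV[R]_m) : Prop :=
  [/\ (forall s t u, mul s (mul t u) = mul (mul s t) u),
      (forall s, mul one s = s),
      (forall s, mul (inv s) s = one),
      (forall x, act one x = x) /\
      (forall s t x, act (mul s t) x = act s (act t x))
    & (forall s, linear_isometry (act s))].

Definition orbit (R : realType) (m : nat) (S : Type)
  (act : S -> 'rV[R]_m -> 'rV[R]_m) (x : 'rV[R]_m) : set 'rV[R]_m :=
  [set act s x | s in [set: S]].

Definition S_invariant (R : realType) (m : nat) (S : Type) (T : Type)
  (act : S -> 'rV[R]_m -> 'rV[R]_m) (f : 'rV[R]_m -> T) : Prop :=
  forall s x, f (act s x) = f x.

(* Spectral decomposition system (X = 'rV_m, S, gamma, (Lam a)_{a : A})
   for H = 'rV_n, axioms [A]-[D]. *)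
Definition spectral_decomposition_system (R : realType) (n m : nat)
  (S : Type) (mul : S -> S -> S) (one : S) (inv : S -> S)
  (act : S -> 'rV[R]_m -> 'rV[R]_m)
  (gamma : 'rV[R]_n -> 'rV[R]_m) (A : Type) (Lam : A -> 'rV[R]_m -> 'rV[R]_n) : Prop :=
  [/\ isometric_group_action mul one inv act,
      (forall a, linear_isometry (Lam a)),
      (exists tau : 'rV[R]_m -> 'rV[R]_m,
          [/\ S_invariant act tau,
              (forall x, orbit act x (tau x))
            & (forall a, gamma \o Lam a = tau)]),
      (forall X, exists a, X = Lam a (gamma X))
    & (forall X Y, dotv X Y <= dotv (gamma X) (gamma Y))].

(* Lower semicontinuity at a point, matching mathcomp's lower_semicontinuous. *)
Definition lsc_at {T : topologicalType} {R : realType} (f : T -> \bar R) (x : T) :=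
  forall a : R, (a%:E < f x)%E ->
    exists2 V, nbhs x V & forall y, V y -> (a%:E < f y)%E.

Definition lsc_envelope {T : topologicalType} {R : realType} (f : T -> \bar R) : T -> \bar R :=
  fun x => ereal_sup [set g x | g in [set g : T -> \bar R |
                        lower_semicontinuous g /\ (forall y, (g y <= f y)%E)]].

(* gamma is continuous: by [A] and [C] it preserves norms, so [D] yields
   |gamma X - gamma Y| <= |X - Y|.  Each Lam a is a continuous isometry, by [C]
   every X equals Lam a (gamma X) for some a, and by [B] and the invariance of
   phi, phi (gamma (Lam a x)) = phi (tau x) = phi x.  Hence phi o gamma and phi
   are continuous reparametrisations of each other (phi = (phi o gamma) o Lam a),
   and lower semicontinuity and lsc minorants pass back and forth along gamma
   and the Lam a. *)

From HB Require Import structures.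
From mathcomp Require Import all_boot all_order all_algebra.
From mathcomp Require Import all_classical all_reals all_analysis.
From mathcomp Require Import ring lra.
Import Order.TTheory GRing.Theory Num.Theory.
Import numFieldTopology.Exports numFieldNormedType.Exports.
Local Open Scope classical_set_scope.
Local Open Scope ring_scope.

Lemma klipschitz_continuous (R : realFieldType) (V W : normedModType R)
    (k : R) (f : V -> W) :
  k.-lipschitz f -> continuous f.
Proof.
move=> f_lip x; apply/cvgrPdist_lt => e e0.
have k1_gt0 : 0 < `|k| + 1 by rewrite ltr_wpDl.
near=> y; have /le_lt_trans -> // : `|f x - f y| <= (`|k| + 1) * `|x - y|.
  apply: le_trans (f_lip (x, y) _) _ => //.
  by rewrite ler_wpM2r // (le_trans (ler_norm k)) // lerDl.
rewrite -ltr_pdivlMl //; near: y.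
apply: (@cvgr_dist_lt _ _ _ _ _ id); first exact: cvg_id.
by rewrite mulr_gt0 ?invr_gt0.
Unshelve. all: by end_near. Qed.

Section dotv.
Context {R : realType} {p : nat}.
Implicit Types u v : 'rV[R]_p.

Lemma dotv_ge0 u : 0 <= dotv u u.
Proof. by apply: sumr_ge0 => i _; rewrite -expr2 sqr_ge0. Qed.

Lemma dotvBB u v : dotv (u - v) (u - v) = dotv u u - 2 * dotv u v + dotv v v.
Proof.
rewrite /dotv mulr_sumr -sumrB -big_split /=.
by apply: eq_bigr => i _; rewrite !mxE; ring.
Qed.

Lemma sqr_entry_le_dotv u j : u ord0 j ^+ 2 <= dotv u u.
Proof.
rewrite /dotv (bigD1 j) //= -expr2 lerDl.
by apply: sumr_ge0 => i _; rewrite -expr2 sqr_ge0.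
Qed.

Lemma sqr_normr_le_dotv u : `|u| ^+ 2 <= dotv u u.
Proof.
rewrite -(sqr_sqrtr (dotv_ge0 u)) lerXn2r ?nnegrE ?sqrtr_ge0 //.
rewrite [`|u|]/Num.Def.normr /= mx_normrE.
apply: bigmax_le => [|[i j] _]; first exact: sqrtr_ge0.
by rewrite (ord1 i) -sqrtr_sqr ler_sqrt ?dotv_ge0 ?sqr_entry_le_dotv.
Qed.

Lemma dotv_le_sqr_normr u : dotv u u <= p%:R * `|u| ^+ 2.
Proof.
have -> : p%:R * `|u| ^+ 2 = \sum_(j < p) `|u| ^+ 2.
  by rewrite sumr_const card_ord mulr_natl.
apply: ler_sum => j _.
rewrite -expr2 -real_normK ?num_real //.
rewrite lerXn2r ?nnegrE // [`|u|]/Num.Def.normr /= mx_normrE.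
exact: (le_bigmax _ _ (ord0, j)).
Qed.

End dotv.

Lemma eq_dotv_of_enorm {R : realType} {p q : nat} [u : 'rV[R]_p] [v : 'rV[R]_q] :
  enorm u = enorm v -> dotv u u = dotv v v.
Proof. by move=> uv; apply/eqP; rewrite -eqr_sqrt ?dotv_ge0 //; apply/eqP. Qed.

Lemma nonexpansive_continuous (R : realType) (p q : nat)
    (f : 'rV[R]_p -> 'rV[R]_q) :
  (forall x y, dotv (f x - f y) (f x - f y) <= dotv (x - y) (x - y)) ->
  continuous f.
Proof.
move=> f_nexp; apply: (@klipschitz_continuous _ _ _ (Num.sqrt p%:R)) => -[x y] _ /=.
rewrite -(@ler_pXn2r _ 2) ?nnegrE ?mulr_ge0 ?sqrtr_ge0 // exprMn sqr_sqrtr //.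
apply: le_trans (sqr_normr_le_dotv _) _.
by apply: le_trans (f_nexp x y) _; exact: dotv_le_sqr_normr.
Qed.

Lemma linear_mapB (R : realType) (p q : nat) (f : 'rV[R]_p -> 'rV[R]_q) :
  linear_map f -> forall x y, f (x - y) = f x - f y.
Proof.
move=> f_lin x y.
by rewrite -[x - y]addrC -scaleN1r f_lin scaleN1r addrC.
Qed.

Lemma linear_isometry_continuous (R : realType) (p q : nat)
    (f : 'rV[R]_p -> 'rV[R]_q) :
  linear_isometry f -> continuous f.
Proof.
move=> [f_lin f_iso]; apply: nonexpansive_continuous => x y.
by rewrite -linear_mapB // (eq_dotv_of_enorm (f_iso _)).
Qed.

Lemma lsc_at_comp {R : realType} {T U : topologicalType} {f : U -> \bar R}
    {g : T -> U} {x : T} :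
  lsc_at f (g x) -> {for x, continuous g} -> lsc_at (f \o g) x.
Proof.
move=> f_lsc g_cont a afgx; have [V gxV fV] := f_lsc a afgx.
by exists (g @^-1` V); [exact: g_cont | move=> y /fV].
Qed.

Section lsc_transfer.
Context {R : realType} {T U : topologicalType} {A : Type}.
Context {g : T -> U} {L : A -> U -> T} {f : U -> \bar R}.
Hypotheses (g_cont : continuous g) (L_cont : forall a, continuous (L a)).
Hypothesis L_g : forall X, exists a, X = L a (g X).
Hypothesis f_gL : forall a x, f (g (L a x)) = f x.

Lemma comp_gL a : f \o g \o L a = f.
Proof. by apply/funext => x; exact: f_gL. Qed.

Lemma lsc_at_compE X : lsc_at (f \o g) X <-> lsc_at f (g X).
Proof.
split=> [fg_lsc|f_lsc]; last exact: lsc_at_comp f_lsc (g_cont X).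
have [a X_Lg] := L_g X; rewrite -(comp_gL a).
by apply: lsc_at_comp (L_cont a _); rewrite -X_Lg.
Qed.

Lemma lower_semicontinuous_compE (a : A) :
  lower_semicontinuous (f \o g) <-> lower_semicontinuous f.
Proof.
split=> lsc x; last exact: lsc_at_comp (lsc (g x)) (g_cont x).
by rewrite -(comp_gL a); exact: lsc_at_comp (lsc (L a x)) (L_cont a x).
Qed.

Lemma lsc_envelope_comp : lsc_envelope (f \o g) = lsc_envelope f \o g.
Proof.
apply/funext => X; rewrite /lsc_envelope /=; congr ereal_sup.
apply/seteqP; split=> _ /= [h [h_lsc h_le] <-].
- have [a X_Lg] := L_g X.
  exists (h \o L a); last by rewrite /= -X_Lg.
  split=> [x|x /=]; first exact: lsc_at_comp (h_lsc (L a x)) (L_cont a x).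
  by rewrite -(f_gL a x); exact: h_le.
- exists (h \o g) => //; split=> [x|x]; last exact: h_le.
  exact: lsc_at_comp (h_lsc (g x)) (g_cont x).
Qed.

End lsc_transfer.

Section spectral_decomposition_system.
Context {R : realType} {n m : nat} {S A : Type}.
Context {mul : S -> S -> S} {one : S} {inv : S -> S}.
Context {act : S -> 'rV[R]_m -> 'rV[R]_m} {gamma : 'rV[R]_n -> 'rV[R]_m}.
Context {Lam : A -> 'rV[R]_m -> 'rV[R]_n}.
Hypothesis sds : spectral_decomposition_system mul one inv act gamma Lam.

Lemma S_invariant_gamma_Lam {T : Type} {f : 'rV[R]_m -> T} :
  S_invariant act f -> forall a x, f (gamma (Lam a x)) = f x.
Proof.
move: sds => [_ _ [tau [_ tau_orbit gamma_Lam]] _ _] f_inv a x.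
have -> : gamma (Lam a x) = tau x by rewrite -(gamma_Lam a).
by have [s _ <-] := tau_orbit x; rewrite f_inv.
Qed.

Lemma dotv_gamma X : dotv (gamma X) (gamma X) = dotv X X.
Proof.
move: sds => [_ Lam_iso _ Lam_gamma _]; have [a X_Lam] := Lam_gamma X.
by rewrite [in RHS]X_Lam; apply/esym/eq_dotv_of_enorm; exact: (Lam_iso a).2.
Qed.

Lemma gamma_continuous : continuous gamma.
Proof.
move: sds => [_ _ _ _ dotv_le]; apply: nonexpansive_continuous => X Y.
by rewrite !dotvBB !dotv_gamma; have := dotv_le X Y; lra.
Qed.

Lemma Lam_continuous a : continuous (Lam a).
Proof. by move: sds => [_ Lam_iso _ _ _]; exact: linear_isometry_continuous. Qed.

End spectral_decomposition_system.

Theorem proposition4p5 (R : realType) (n m : nat)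
  (S : Type) (mul : S -> S -> S) (one : S) (inv : S -> S)
  (act : S -> 'rV[R]_m -> 'rV[R]_m)
  (gamma : 'rV[R]_n -> 'rV[R]_m) (A : Type) (Lam : A -> 'rV[R]_m -> 'rV[R]_n)
  (phi : 'rV[R]_m -> \bar R) :
  spectral_decomposition_system mul one inv act gamma Lam ->
  S_invariant act phi ->
  [/\ lsc_envelope (phi \o gamma) = lsc_envelope phi \o gamma,
      (forall X : 'rV[R]_n, lsc_at (phi \o gamma) X <-> lsc_at phi (gamma X))
    & (lower_semicontinuous (phi \o gamma) <-> lower_semicontinuous phi)].
Proof.
move=> sds phi_inv.
have gamma_cont := gamma_continuous sds.
have Lam_cont := Lam_continuous sds.
have [_ _ _ Lam_gamma _] := sds.
have phi_gamma_Lam := S_invariant_gamma_Lam sds phi_inv.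
have [a0 _] := Lam_gamma 0.
split.
- exact: lsc_envelope_comp gamma_cont Lam_cont Lam_gamma phi_gamma_Lam.
- exact: lsc_at_compE gamma_cont Lam_cont Lam_gamma phi_gamma_Lam.
- exact: lower_semicontinuous_compE gamma_cont Lam_cont phi_gamma_Lam a0.
Qed.
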